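(* Let $a\in\mathbb{R}^{p+1}$ (i.e. $a=\sum_{s=0}^pa_sv_s$ with $a_s\in\mathbb{R}$) and $\underline{\omega}\in\mathbb{S}$. Then for every $b\in\mathbb{A}$, $$a(\underline{\omega}b)=\underline{\omega}(a^cb).$$
   Context: Let $\mathbb{A}$ be a real alternative algebra (the associator $[a,b,c]=(ab)c-a(bc)$ is an alternating trilinear function) with unity $1$, of finite real dimension $d>1$, equipped with an anti-involution $a\mapsto a^c$ (real linear, $a^c=a$ for real $a$, $(a^c)^c=a$, $(ab)^c=b^ca^c$). Let $t(x)=x+x^c$, $n(x)=xx^c$, $\mathbb{S}_{\mathbb{A}}=\{x: t(x)=0,\ n(x)=1\}$ (assumed nonempty) and $Q_{\mathbb{A}}=\mathbb{R}\cup\{x: t(x)\in\mathbb{R},\ n(x)\in\mathbb{R},\ 4n(x)>t(x)^2\}$. Let $M$ be a real subspace with $\mathbb{R}\subsetneq M\subseteq Q_{\mathbb{A}}$ having a basis $(v_0,\dots,v_m)$, $m\ge1$, $v_0=1$, $v_s\in\mathbb{S}_{\mathbb{A}}$, $v_sv_t=-v_tv_s$ for distinct $s,t\ge1$. Fix $p\in\{0,\dots,m-1\}$; $\mathbb{R}^{p+1}$ denotes the span of $v_0,\dots,v_p$ and $\mathbb{S}=\{\sum_{s=p+1}^mx_sv_s: x_s\in\mathbb{R},\ \sum_{s=p+1}^m x_s^2=1\}$. *)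

From HB Require Import structures.
From mathcomp Require Import all_boot all_order all_algebra.
From mathcomp Require Import reals.
Set Implicit Arguments. Unset Strict Implicit. Unset Printing Implicit Defensive.
Import Order.TTheory GRing.Theory Num.Theory.
Local Open Scope ring_scope.

Section AltAlg.
Variables (R : realType) (A : vectType R).
Variables (mul : A -> A -> A) (one : A) (cj : A -> A).

Definition is_real (x : A) : Prop := exists r : R, x = r *: one.

Definition associator (a b c : A) : A := mul (mul a b) c - mul a (mul b c).

Record alt_alg_inv : Prop := AltAlgInv {
  mulDl : forall x y z, mul (x + y) z = mul x z + mul y z;
  mulDr : forall x y z, mul x (y + z) = mul x y + mul x z;
  mulZl : forall (r : R) x y, mul (r *: x) y = r *: mul x y;
  mulZr : forall (r : R) x y, mul x (r *: y) = r *: mul x y;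
  mul1l : forall x, mul one x = x;
  mul1r : forall x, mul x one = x;
  assoc_alt12 : forall x y, associator x x y = 0;
  assoc_alt13 : forall x y, associator x y x = 0;
  assoc_alt23 : forall x y, associator y x x = 0;
  cjD : forall x y, cj (x + y) = cj x + cj y;
  cjZ : forall (r : R) x, cj (r *: x) = r *: cj x;
  cj_real : forall r : R, cj (r *: one) = r *: one;
  cjK : forall x, cj (cj x) = x;
  cjM : forall x y, cj (mul x y) = mul (cj y) (cj x)
}.

Definition tr (x : A) : A := x + cj x.
Definition nrm (x : A) : A := mul x (cj x).

Definition in_SA (x : A) : Prop := tr x = 0 /\ nrm x = one.

Definition in_QA (x : A) : Prop :=
  is_real x \/
  exists t n : R, tr x = t *: one /\ nrm x = n *: one /\ t ^+ 2 < 4 * n.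

End AltAlg.

From HB Require Import structures.
From mathcomp Require Import all_boot all_order all_algebra.
From mathcomp Require Import reals.
Import Order.TTheory GRing.Theory Num.Theory.
Local Open Scope ring_scope.

(* Write a = a_0 + a' with a' = sum_(1 <= s <= p) a_s v_s, so that a^c = a_0 - a'.
   The claim reduces to a'(w b) = - w(a' b).  Since every v_s with s <= p
   anticommutes with every v_t with t > p, bilinearity gives a' w = - w a'.
   Linearizing the alternating identity [x, x, z] = 0 shows that the associator
   is antisymmetric in its first two arguments, and for anticommuting x, y this
   is exactly x(yz) = - y(xz). *)

Section AlternativeAlgebra.
Context {R : realType} {A : vectType R} {mul : A -> A -> A} {one : A} {cj : A -> A}.
Hypothesis HA : alt_alg_inv mul one cj.

Lemma amulNl x y : mul (- x) y = - mul x y.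
Proof. by rewrite -scaleN1r (mulZl HA) scaleN1r. Qed.

Lemma amulNr x y : mul x (- y) = - mul x y.
Proof. by rewrite -scaleN1r (mulZr HA) scaleN1r. Qed.

Lemma amul0l y : mul 0 y = 0.
Proof. by have := mulZl HA 0 0 y; rewrite !scale0r. Qed.

Lemma amul0r x : mul x 0 = 0.
Proof. by have := mulZr HA 0 x 0; rewrite !scale0r. Qed.

Lemma cj0 : cj 0 = 0.
Proof. by have := cjZ HA 0 0; rewrite !scale0r. Qed.

Lemma amul_suml (I : Type) (r : seq I) (F : I -> A) y :
  mul (\sum_(i <- r) F i) y = \sum_(i <- r) mul (F i) y.
Proof. exact: (big_morph (mul^~ y) (fun u v => mulDl HA u v y) (amul0l y)). Qed.

Lemma amul_sumr (I : Type) (r : seq I) (F : I -> A) x :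
  mul x (\sum_(i <- r) F i) = \sum_(i <- r) mul x (F i).
Proof. exact: (big_morph (mul x) (mulDr HA x) (amul0r x)). Qed.

Lemma cj_sum (I : Type) (r : seq I) (F : I -> A) :
  cj (\sum_(i <- r) F i) = \sum_(i <- r) cj (F i).
Proof. exact: (big_morph cj (cjD HA) cj0). Qed.

Lemma cj_tr0 x : tr cj x = 0 -> cj x = - x.
Proof. by move=> /eqP; rewrite /tr addrC addr_eq0 => /eqP. Qed.

Lemma associatorNC x y z : associator mul x y z = - associator mul y x z.
Proof.
apply/eqP; rewrite -addr_eq0; apply/eqP.
have := assoc_alt12 HA (x + y) z.
rewrite /associator !(mulDl HA, mulDr HA).
have := assoc_alt12 HA x z; have := assoc_alt12 HA y z.
rewrite /associator => /subr0_eq -> /subr0_eq -> <-.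
set P := mul x (mul x z); set Q := mul y (mul y z).
rewrite !(addrC _ Q) (addrACA P (mul (mul x y) z)) (addrACA P (mul x (mul y z))).
by rewrite [P + Q + _]addrC addrKA addrACA opprD.
Qed.

Lemma mul_anticomm_left x y z :
  mul x y = - mul y x -> mul x (mul y z) = - mul y (mul x z).
Proof.
move=> xy_anti; have := associatorNC x y z.
by rewrite /associator xy_anti amulNl opprB addrC => /addIr <-; rewrite opprK.
Qed.

Lemma anticomm_sum (I J : eqType) (r1 : seq I) (r2 : seq J)
    (c : I -> R) (d : J -> R) (u : I -> A) (w : J -> A) :
  (forall i j, i \in r1 -> j \in r2 -> mul (u i) (w j) = - mul (w j) (u i)) ->
  mul (\sum_(i <- r1) c i *: u i) (\sum_(j <- r2) d j *: w j) =
  - mul (\sum_(j <- r2) d j *: w j) (\sum_(i <- r1) c i *: u i).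
Proof.
move=> uw_anti; rewrite amul_suml amul_sumr -sumrN big_seq [RHS]big_seq.
apply: eq_bigr => i ri; rewrite amul_suml amul_sumr -sumrN big_seq [RHS]big_seq.
apply: eq_bigr => j rj.
by rewrite (mulZl HA) !(mulZr HA) (mulZl HA) uw_anti // !scalerN.
Qed.

End AlternativeAlgebra.

Theorem lemma3p2 (R : realType) (A : vectType R)
  (mul : A -> A -> A) (one : A) (cj : A -> A)
  (HA : alt_alg_inv mul one cj)
  (Hdim : (1 < \dim (fullv : {vspace A}))%N)
  (HSne : exists x : A, in_SA mul one cj x)
  (m : nat) (v : nat -> A)
  (Hm : (1 <= m)%N)
  (Hfree : free (mkseq v m.+1))
  (Hv0 : v 0%N = one)
  (HvS : forall s : nat, (1 <= s <= m)%N -> in_SA mul one cj (v s))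
  (Hanti : forall s t : nat, (1 <= s <= m)%N -> (1 <= t <= m)%N -> s <> t ->
             mul (v s) (v t) = - mul (v t) (v s))
  (HRM : (<[one]> <= <<mkseq v m.+1>>)%VS /\ <[one]>%VS != <<mkseq v m.+1>>%VS)
  (HMQ : forall x : A, x \in <<mkseq v m.+1>>%VS -> in_QA mul one cj x)
  (p : nat) (Hp : (p < m)%N)
  (a : nat -> R) (x : nat -> R)
  (Hx : \sum_(p.+1 <= s < m.+1) x s ^+ 2 = 1)
  (b : A) :
  let av := \sum_(0 <= s < p.+1) a s *: v s in
  let w := \sum_(p.+1 <= s < m.+1) x s *: v s in
  mul av (mul w b) = mul w (mul (cj av) b).
Proof.
move=> av w; set a' := \sum_(1 <= s < p.+1) a s *: v s.
have av_split : av = a 0%N *: one + a' by rewrite /av big_ltn // Hv0.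
have cj_a' : cj a' = - a'.
  rewrite (cj_sum HA) -sumrN big_seq [RHS]big_seq; apply: eq_bigr => s.
  rewrite mem_index_iota => /andP[s_ge1 s_le_p].
  have /HvS[/cj_tr0 cj_vs _] : (1 <= s <= m)%N by rewrite s_ge1 ltnW // (leq_trans s_le_p).
  by rewrite (cjZ HA) cj_vs scalerN.
have a'w_anti : mul a' w = - mul w a'.
  apply: (anticomm_sum HA) => s t; rewrite !mem_index_iota.
  move=> /andP[s_ge1 s_le_p] /andP[t_gt_p t_le_m]; apply: Hanti.
  - by rewrite s_ge1 ltnW // (leq_trans s_le_p).
  - by rewrite (leq_trans _ t_gt_p).
  - by move=> st; move: t_gt_p; rewrite -st ltnNge -ltnS s_le_p.
rewrite av_split (cjD HA) (cj_real HA) cj_a' !(mulDl HA) !(mulZl HA) !(mul1l HA).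
rewrite (amulNl HA) (mul_anticomm_left HA _ _ b a'w_anti).
by rewrite (mulDr HA) (mulZr HA) (amulNr HA).
Qed.
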